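(* Let $H$ and $K$ be subgroups of a finite group $G$, and suppose $H\not\le C_G(K)$. Then $\Pr(H,K)\le \frac{n+m-1}{nm}$, where $n=|H:C_H(K)|$ and $m=\min_{x\in H\setminus C_H(K)}|K:C_K(x)|$.
   Context: For subsets $X,Y$ of a finite group, $\Pr(X,Y)=|\{(x,y)\in X\times Y: xy=yx\}|/(|X||Y|)$. $C_H(K)$ is the set of elements of $H$ commuting with every element of $K$; $C_K(x)$ the set of elements of $K$ commuting with $x$. *)

From mathcomp Require Import all_boot all_order all_algebra all_fingroup.
Set Implicit Arguments. Unset Strict Implicit. Unset Printing Implicit Defensive.
Import GRing.Theory Num.Theory.
Local Open Scope group_scope.

Definition commPr (gT : finGroupType) (X Y : {set gT}) : rat :=
  (#|[set p in setX X Y | ((p.1 * p.2)%g == (p.2 * p.1)%g)]|%:R / (#|X| * #|Y|)%:R)%R.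

(* m = min_{x in H \ C_H(K)} |K : C_K(x)|  (the default #|K| is an upper bound
   of every index, so it does not affect the minimum on a nonempty range). *)
Definition min_index (gT : finGroupType) (H K : {group gT}) : nat :=
  \big[minn/#|K|]_(x in H :\: 'C_H(K)) #|K : 'C_K[x]|.

From mathcomp Require Import all_boot all_order all_algebra all_fingroup.
From mathcomp Require Import zify.
Import Order.TTheory GRing.Theory Num.Theory.
Local Open Scope group_scope.

(* Count the commuting pairs (x, y) in H x K row by row: row x contributes
   #|C_K(x)|, which is all of K when x is in C := C_H(K), and at most
   #|K| / m otherwise, by the choice of m.  As #|H :\: C| = #|C| (n - 1),
   this gives #|pairs| * m <= #|C| #|K| (m + n - 1), and multiplying by
   n = #|H| / #|C| yields Pr(H, K) <= (n + m - 1) / (n m). *)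

Lemma card_commuting_pairs (gT : finGroupType) (A B : {set gT}) :
  #|[set p in setX A B | p.1 * p.2 == p.2 * p.1]| = (\sum_(x in A) #|'C_B[x]|)%N.
Proof.
rewrite -sum1_card (eq_bigl [pred p | (p.1 \in A) && ((p.2 \in B) && (p.1 \in 'C[p.2]))]);
  last by move=> [x y]; rewrite /= cent1E !inE andbA.
rewrite -(pair_big_dep [in A] (fun x y => (y \in B) && (x \in 'C[y])) (fun _ _ => 1%N)).
apply: eq_bigr => x _; rewrite -sum1_card; apply: eq_bigl => y.
by rewrite /= in_setI cent1C.
Qed.

Section CommutingPairs.

Variables (gT : finGroupType) (H K : {group gT}).

Local Notation C := 'C_H(K).
Local Notation n := #|H : C|.
Local Notation m := (min_index H K).

Lemma min_index_le x : x \in H :\: C -> (m <= #|K : 'C_K[x]|)%N.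
Proof. exact: (@bigmin_le_cond _ nat). Qed.

Lemma min_index_gt0 : (0 < m)%N.
Proof. by apply: (@le_bigmin _ nat) => [|x _]; exact: cardG_gt0 || exact: indexg_gt0. Qed.

Lemma card_cent1_min_index x : x \in H :\: C -> (#|'C_K[x]| * m <= #|K|)%N.
Proof.
move=> Hx; rewrite -(Lagrange (subsetIl K 'C[x])) leq_mul2l.
by rewrite min_index_le ?orbT.
Qed.

Lemma sum_card_cent1_centraliser : (\sum_(x in C) #|'C_K[x]| = #|C| * #|K|)%N.
Proof.
rewrite -sum_nat_const; apply: eq_bigr => x /setIP[_ cKx].
by rewrite (setIidPl _) // sub_cent1.
Qed.

Lemma commuting_pairs_bound :
  (#|[set p in setX H K | (p.1 * p.2 == p.2 * p.1)%g]| * (n * m)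
     <= #|H| * #|K| * (n + m - 1))%N.
Proof.
have sCH : C \subset H := subsetIl H _.
have cardH : #|H| = (#|C| * n)%N by rewrite Lagrange.
have outside_C : ((\sum_(x in H :\: C) #|'C_K[x]|) * m <= #|H :\: C| * #|K|)%N.
  rewrite big_distrl -sum_nat_const /=.
  by apply: leq_sum => x; apply: card_cent1_min_index.
rewrite card_commuting_pairs (big_setID C) (setIidPr sCH) sum_card_cent1_centraliser.
move: outside_C; rewrite cardsD (setIidPr sCH) cardH.
move: (\sum_(x in _) _)%N #|C| #|K| (indexg_gt0 H C) min_index_gt0.
move=> /= s c k n_gt0 m_gt0 /(leq_mul (leqnn n)); nia.
Qed.

End CommutingPairs.

Theorem lemma2p4 (gT : finGroupType) (G H K : {group gT})
  (sHG : H \subset G) (sKG : K \subset G) (nHC : ~~ (H \subset 'C_G(K))) :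
  let n := #|H : 'C_H(K)| in
  let m := min_index H K in
  (commPr H K <= ((n + m - 1)%:R / (n * m)%:R : rat))%R.
Proof.
cbv zeta; have nm_gt0 : (0 < #|H : 'C_H(K)| * min_index H K)%N.
  by rewrite muln_gt0 indexg_gt0 min_index_gt0.
rewrite /commPr ler_pdivrMr ?ltr0n ?muln_gt0 ?cardG_gt0 // mulrAC.
rewrite ler_pdivlMr ?ltr0n // -!natrM ler_nat.
by rewrite [leqRHS]mulnC commuting_pairs_bound.
Qed.
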